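(* Let $q$ be a prime power with $q\equiv 1 \pmod 3$, let $\delta\in\mathbb{F}_q$ be a cubic nonresidue, and let $\mathbb{F}_q(\delta^{1/3})$ be the cubic extension with $\mathbb{F}_q$-basis $\{1,\delta^{1/3},\delta^{2/3}\}$; write $\alpha=\alpha_1+\alpha_2\delta^{1/3}+\alpha_3\delta^{2/3}$ with $\alpha_i\in\mathbb{F}_q$. Let $\mathbb{H}_q=\{(\alpha,\beta)\in \mathbb{F}_q(\delta^{1/3})^2 : \alpha_2\beta_3-\alpha_3\beta_2\neq 0\}$ with the action of $\mathrm{GL}_3(\mathbb{F}_q)$ given by \[ \begin{bmatrix} a & b & c\\ d & e & f\\ r & s & t \end{bmatrix} (\alpha,\beta) = \left(\frac{a\alpha+b\beta+c}{r\alpha+s\beta+t}, \frac{d\alpha+e\beta+f}{r\alpha+s\beta+t} \right). \] Let \[H=\left\{\begin{bmatrix} d & y & x\\ 0 & c & b\\ 0 & 0 & d\end{bmatrix} : c,d\in\mathbb{F}_q^\times,\ b,x,y\in\mathbb{F}_q\right\}\] (the centralizer in $\mathrm{GL}_3(\mathbb{F}_q)$ of $\begin{bmatrix} a&0&a\\0&a&0\\0&0&a\end{bmatrix}$, $a\neq 0$). Then \[\{(u\delta^{1/3},\,v\delta^{1/3}+\delta^{2/3}) : u,v\in\mathbb{F}_q,\ u\neq 0\}\ \sqcup\ \{(\delta^{1/3}+u\delta^{2/3},\,\delta^{1/3}) : u\in\mathbb{F}_q^\times\}\] is a fundamental domain for the action of $H$ on $\mathbb{H}_q$.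
   Context: A fundamental domain for the action of a subgroup $H$ on $\mathbb{H}_q$ is a subset of $\mathbb{H}_q$ containing exactly one element of each $H$-orbit. A cubic nonresidue is an element of $\mathbb{F}_q^\times$ that is not a cube in $\mathbb{F}_q$. *)

From HB Require Import structures.
From mathcomp Require Import all_boot all_order all_algebra all_field.
Set Implicit Arguments. Unset Strict Implicit. Unset Printing Implicit Defensive.
Import GRing.Theory.
Local Open Scope ring_scope.

Section Defs.
Variables (F : finFieldType) (L : fieldExtType F) (w : L).

Definition i0 : 'I_3 := @Ordinal 3 0 isT.
Definition i1 : 'I_3 := @Ordinal 3 1 isT.
Definition i2 : 'I_3 := @Ordinal 3 2 isT.

Definition cubic_nonresidue (delta : F) : Prop :=
  delta != 0 /\ ~ (exists x : F, x ^+ 3 = delta).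

(* the F-basis {1, w, w^2} of F(delta^{1/3}) (w = delta^{1/3}) *)
Definition cbasis : 3.-tuple L := [tuple 1; w; w ^+ 2].

(* coordinates alpha_1, alpha_2, alpha_3 of alpha in this basis *)
Definition cco (i : 'I_3) (x : L) : F := coord cbasis i x.

Definition Hq (p : L * L) : Prop :=
  cco i1 p.1 * cco i2 p.2 - cco i2 p.1 * cco i1 p.2 != 0.

Definition gact (A : 'M[F]_3) (p : L * L) : L * L :=
  let den := A i2 i0 *: p.1 + A i2 i1 *: p.2 + (A i2 i2)%:A in
  ((A i0 i0 *: p.1 + A i0 i1 *: p.2 + (A i0 i2)%:A) / den,
   (A i1 i0 *: p.1 + A i1 i1 *: p.2 + (A i1 i2)%:A) / den).

Definition Hgrp (A : 'M[F]_3) : Prop :=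
  (A i0 i0 != 0) /\ (A i1 i1 != 0) /\ (A i2 i2 = A i0 i0) /\
  (A i1 i0 = 0) /\ (A i2 i0 = 0) /\ (A i2 i1 = 0).

Definition D1 (p : L * L) : Prop :=
  exists u v : F, u != 0 /\ p = (u *: w, v *: w + w ^+ 2).
Definition D2 (p : L * L) : Prop :=
  exists u : F, u != 0 /\ p = (w + u *: w ^+ 2, w).

Definition fundamental_domain (G : 'M[F]_3 -> Prop) (X D : L * L -> Prop) : Prop :=
  (forall p, D p -> X p) /\
  (forall p, X p -> exists d, (D d /\ exists g, G g /\ gact g p = d) /\
       forall d', D d' -> (exists g, G g /\ gact g p = d') -> d' = d).
End Defs.

From mathcomp Require Import all_boot all_order all_algebra all_field.
From mathcomp Require Import ring.
Import GRing.Theory.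
Local Open Scope ring_scope.

(** Write [alpha = a0 + a1 w + a2 w^2] and [beta = b0 + b1 w + b2 w^2].  An
element of [H] acts as the affine map [(alpha, beta) |-> (alpha + Y beta + X,
C beta + B)] with [C <> 0], and every such map comes from [H].  The translations
kill the constant coordinates, [C] rescales [beta] and [Y] shears [alpha] along
[beta]; the determinant [a1 b2 - a2 b1] is multiplied by [C].  If [b2 <> 0] one
normalises [b2 = 1] and [a2 = 0], landing in the first piece at the point given
by the invariants [(a1 b2 - a2 b1) / b2] and [b1 / b2].  If [b2 = 0], a condition
preserved by [H], then [a2] is invariant and one normalises [b1 = a1 = 1],
landing in the second piece. *)

Lemma irreducible_XcubesubC {F : fieldType} (delta : F) :
  ~ (exists x : F, x ^+ 3 = delta) -> irreducible_poly ('X^3 - delta%:P).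
Proof.
move=> ncube; apply: cubic_irreducible => [|x]; first by rewrite size_XnsubC.
by rewrite /root !hornerE subr_eq0; apply/eqP => x3; apply: ncube; exists x.
Qed.

Lemma free_cube_root_powers {F : fieldType} {L : fieldExtType F} {delta : F} {w : L} :
  ~ (exists x : F, x ^+ 3 = delta) -> w ^+ 3 = delta%:A -> free [tuple 1; w; w ^+ 2].
Proof.
move=> ncube w3; apply/freeP => k k_w i.
pose P : {poly F} := \poly_(j < 3) k (inord j).
pose q : {poly F} := 'X^3 - delta%:P.
have root_q : root (map_poly (in_alg L) q) w.
  by rewrite /root rmorphB /= map_polyXn map_polyC !hornerE w3 subrr.
have root_P : root (map_poly (in_alg L) P) w.
  rewrite /root -k_w /P poly_def rmorph_sum horner_sum !big_ord_recr !big_ord0 /=.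
  rewrite !map_polyZ !map_polyXn !hornerZ !hornerXn !mulr_algl !add0r expr0 expr1.
  apply/eqP.
  by congr (_%:A + _ *: _ + _ *: _); congr k; apply/val_inj; rewrite /= inordK.
have P0 : P = 0.
  apply/eqP; apply: contraTT root_P => nzP.
  apply: coprimep_root root_q; rewrite coprimep_map.
  rewrite irreducible_poly_coprime; last exact: irreducible_XcubesubC.
  apply/negP => /(dvdp_leq nzP); rewrite size_XnsubC // leqNgt.
  by rewrite (leq_ltn_trans (size_poly _ _)).
by have := congr1 (coefp i) P0; rewrite /= coef_poly ltn_ord inord_val coef0.
Qed.

(* Turns scalings into products in [L], which [ring] and [field] can handle. *)
Lemma scale_in_alg {F : fieldType} {L : fieldExtType F} (a : F) (x : L) :
  a *: x = in_alg L a * x.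
Proof. by rewrite in_algE mulr_algl. Qed.

Section Action.
Context {F : finFieldType} {L : fieldExtType F}.

Definition haff (Y X C B : F) (p : L * L) : L * L :=
  (p.1 + Y *: p.2 + X%:A, C *: p.2 + B%:A).

Lemma gact_Hgrp g p : Hgrp g ->
  gact g p = haff (g i0 i1 / g i0 i0) (g i0 i2 / g i0 i0)
                  (g i1 i1 / g i0 i0) (g i1 i2 / g i0 i0) p.
Proof.
move=> [g00 [_ [g22 [g10 [g20 g21]]]]].
have g00L : in_alg L (g i0 i0) != 0 by rewrite fmorph_eq0.
rewrite /gact /haff g22 g10 g20 g21 !scale0r !add0r.
by congr (_, _); rewrite !scale_in_alg; field.
Qed.

Definition hmx (Y X C B : F) : 'M[F]_3 :=
  \matrix_(i, j) nth 0 (nth [::] [:: [:: 1; Y; X]; [:: 0; C; B]; [:: 0; 0; 1]] i) j.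

Lemma Hgrp_hmx Y X C B : C != 0 -> Hgrp (hmx Y X C B).
Proof. by move=> C_neq0; rewrite /Hgrp !mxE /= oner_neq0. Qed.

Lemma Hgrp_orbitE (p d : L * L) :
  (exists g, Hgrp g /\ gact g p = d) <->
  exists Y X C B : F, C != 0 /\ haff Y X C B p = d.
Proof.
split=> [[g [Hg <-]] | [Y [X [C [B [C_neq0 <-]]]]]].
  have [g00 [g11 _]] := Hg.
  do 4 eexists; split; last by rewrite gact_Hgrp.
  by rewrite mulf_neq0 ?invr_eq0.
have Hg := Hgrp_hmx Y X C B C_neq0.
by exists (hmx Y X C B); split=> //; rewrite gact_Hgrp // !mxE /= !divr1.
Qed.

End Action.

Section Coordinates.
Context {F : finFieldType} {L : fieldExtType F} (w : L).

Definition ccomb (x0 x1 x2 : F) : L := x0%:A + x1 *: w + x2 *: w ^+ 2.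

Lemma haff_ccomb Y X C B a0 a1 a2 b0 b1 b2 :
  haff Y X C B (ccomb a0 a1 a2, ccomb b0 b1 b2) =
  (ccomb (a0 + Y * b0 + X) (a1 + Y * b1) (a2 + Y * b2),
   ccomb (C * b0 + B) (C * b1) (C * b2)).
Proof. by rewrite /haff /ccomb /=; congr (_, _); rewrite !scale_in_alg; ring. Qed.

Lemma ccomb_sum x0 x1 x2 :
  ccomb x0 x1 x2 = \sum_(i < 3) [:: x0; x1; x2]`_i *: (cbasis w)`_i.
Proof. by rewrite !big_ord_recl big_ord0 addr0 addrA. Qed.

Definition hrep (a1 a2 b1 b2 : F) : L * L :=
  if b2 != 0 then (ccomb 0 ((a1 * b2 - a2 * b1) / b2) 0, ccomb 0 (b1 / b2) 1)
  else (ccomb 0 1 a2, ccomb 0 1 0).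

End Coordinates.

Section Basis.
Context {F : finFieldType} {L : fieldExtType F} {w : L}.
Hypothesis basis_w : basis_of fullv (cbasis w).

Lemma cco_ccomb i x0 x1 x2 : cco w i (ccomb w x0 x1 x2) = [:: x0; x1; x2]`_i.
Proof. by rewrite /cco ccomb_sum coord_sum_free // (basis_free basis_w). Qed.

Lemma ccomb_cco x : ccomb w (cco w i0 x) (cco w i1 x) (cco w i2 x) = x.
Proof.
rewrite ccomb_sum {4}(coord_basis basis_w (memvf x)).
by apply: eq_bigr => -[[|[|[|//]]] ?] _ /=; congr (coord _ _ _ *: _); apply: val_inj.
Qed.

Lemma ccomb_surj x : exists a0 a1 a2, x = ccomb w a0 a1 a2.
Proof. by exists (cco w i0 x), (cco w i1 x), (cco w i2 x); rewrite ccomb_cco. Qed.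

Lemma ccomb_inj a0 a1 a2 b0 b1 b2 :
  ccomb w a0 a1 a2 = ccomb w b0 b1 b2 -> [/\ a0 = b0, a1 = b1 & a2 = b2].
Proof.
move=> e; have c i := congr1 (cco w i) e.
by split; [move: (c i0) | move: (c i1) | move: (c i2)]; rewrite !cco_ccomb.
Qed.

Lemma HqE a0 a1 a2 b0 b1 b2 :
  Hq w (ccomb w a0 a1 a2, ccomb w b0 b1 b2) <-> a1 * b2 - a2 * b1 != 0.
Proof. by rewrite /Hq /= !cco_ccomb. Qed.

Lemma D1P d : D1 w d <-> exists u v, u != 0 /\ d = (ccomb w 0 u 0, ccomb w 0 v 1).
Proof.
by split=> -[u [v [u0 ->]]]; exists u, v; rewrite /ccomb !scale0r !add0r addr0 scale1r.
Qed.

Lemma D2P d : D2 w d <-> exists u, u != 0 /\ d = (ccomb w 0 1 u, ccomb w 0 1 0).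
Proof.
by split=> -[u [u0 ->]]; exists u; rewrite /ccomb !scale0r !add0r addr0 !scale1r.
Qed.

Section Orbit.
Variables a0 a1 a2 b0 b1 b2 : F.
Hypothesis det_neq0 : a1 * b2 - a2 * b1 != 0.

Lemma hrep_D : D1 w (hrep w a1 a2 b1 b2) \/ D2 w (hrep w a1 a2 b1 b2).
Proof.
rewrite /hrep; case: ifPn => [b2_neq0 | /negPn/eqP b2_0].
  left; apply/D1P; exists ((a1 * b2 - a2 * b1) / b2), (b1 / b2).
  by rewrite mulf_neq0 ?invr_eq0.
right; apply/D2P; exists a2; split=> //.
by move: det_neq0; rewrite b2_0 mulr0 sub0r oppr_eq0 mulf_eq0 negb_or => /andP[].
Qed.

Lemma haff_hrep : exists Y X C B : F,
  C != 0 /\ haff Y X C B (ccomb w a0 a1 a2, ccomb w b0 b1 b2) = hrep w a1 a2 b1 b2.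
Proof.
rewrite /hrep; case: ifPn => [b2_neq0 | /negPn/eqP b2_0].
  exists (- a2 / b2), (- (a0 - a2 / b2 * b0)), b2^-1, (- b0 / b2).
  by rewrite invr_eq0 haff_ccomb; split=> //; congr (_, _); congr ccomb; field.
have b1_neq0 : b1 != 0.
  by move: det_neq0; rewrite b2_0 mulr0 sub0r oppr_eq0 mulf_eq0 negb_or => /andP[].
exists ((1 - a1) / b1), (- (a0 + (1 - a1) / b1 * b0)), b1^-1, (- b0 / b1).
by rewrite invr_eq0 haff_ccomb b2_0; split=> //; congr (_, _); congr ccomb; field.
Qed.

Lemma orbit_hrep Y X C B d : C != 0 -> D1 w d \/ D2 w d ->
  haff Y X C B (ccomb w a0 a1 a2, ccomb w b0 b1 b2) = d -> d = hrep w a1 a2 b1 b2.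
Proof.
move=> C_neq0 [/D1P[u [v [_ ->]]] | /D2P[u [_ ->]]];
  rewrite haff_ccomb => -[/ccomb_inj[_ e1 e2] /ccomb_inj[_ f1 f2]]; rewrite /hrep.
- have b2_neq0 : b2 != 0 by apply: contra_eq_neq f2 => ->; rewrite mulr0 eq_sym oner_neq0.
  have C_def : C = b2^-1 by apply: (mulIf b2_neq0); rewrite f2 mulVf.
  have Y_def : Y = - a2 / b2.
    by apply: (mulIf b2_neq0); rewrite divfK //; apply/eqP; rewrite -addr_eq0 addrC e2.
  by rewrite b2_neq0 -e1 -f1 C_def Y_def; congr (_, _); congr ccomb; field.
- have b2_0 : b2 = 0 by move/eqP: f2; rewrite mulf_eq0 (negbTE C_neq0) => /eqP.
  by rewrite b2_0 eqxx -e2 b2_0 mulr0 addr0.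
Qed.

End Orbit.

End Basis.

Theorem proposition5p1 (F : finFieldType) (L : fieldExtType F)
    (delta : F) (w : L) :
  (#|F| %% 3 = 1)%N ->
  cubic_nonresidue delta ->
  (\dim {:L} = 3)%N ->
  w ^+ 3 = delta%:A ->
  (forall p, ~ (D1 w p /\ D2 w p)) /\
  @fundamental_domain F L (@Hgrp F) (Hq w) (fun p => D1 w p \/ D2 w p).
Proof.
(* The congruence is implied by the existence of a cubic nonresidue. *)
move=> _ [_ ncube] dimL w3.
have basis_w : basis_of fullv (cbasis w).
  by rewrite basisEfree (free_cube_root_powers ncube w3) subvf dimL size_tuple.
split.
  move=> p [/D1P[u [v [_ ->]]] /D2P[u' [_ []]]] _ /(ccomb_inj basis_w)[_ _].
  by apply/eqP; rewrite oner_neq0.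
split.
  move=> p [/D1P[u [v [u_neq0 ->]]] | /D2P[u [u_neq0 ->]]]; apply/(HqE basis_w).
    by rewrite mulr1 mul0r subr0.
  by rewrite mulr0 mulr1 sub0r oppr_eq0.
move=> [a b]; have [a0 [a1 [a2 ->]]] := ccomb_surj basis_w a.
have [b0 [b1 [b2 ->]]] := ccomb_surj basis_w b.
move/(HqE basis_w) => det_neq0; exists (hrep w a1 a2 b1 b2); split.
  split; first exact: hrep_D.
  by apply/Hgrp_orbitE; apply: haff_hrep.
move=> d Dd /Hgrp_orbitE[Y [X [C [B [C_neq0 e]]]]].
exact: orbit_hrep C_neq0 Dd e.
Qed.
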